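(* Let $p\in(0,1)$, $\gamma>0$, $B>0$, $w\in\mathbb{N}$, and for each $N\in\mathbb{N}$ let $(\xi_j^{(N)*})_{j=1}^N$ be the unique maximizer of $\mathcal{T}_N$. Let $(\xi_j^* )_{j\ge1}$ be the unique maximizer of $\mathcal{T}_\infty$ over admissible sequences. Then for every fixed $j\in\mathbb{N}$, the limit $\lim_{N\to\infty}\xi_j^{(N)*}$ exists and equals $\xi_j^*$.
   Context: Logarithms are base 2. A nonnegative sequence $(x_j)_{j\ge1}$ is admissible if $\sum_j x_j\le B$. For an admissible sequence, $$\mathcal{T}_\infty(x_1,x_2,\dots)=\sum_{k=1}^{w}p^2(1-p)^{k-1}\frac{k}{2}\log_2\!\Big(1+\gamma\frac{B}{k}\Big)+\sum_{j=1}^{\infty}p(1-p)^{j+w-1}\frac12\log_2(1+\gamma x_j)+\sum_{k=1}^{\infty}p^2(1-p)^{k+w-1}\frac{w}{2}\log_2\!\Big(1+\gamma\frac{B-\sum_{j=1}^{k}x_j}{w}\Big).$$ The paper takes as given that $\mathcal{T}_\infty$ has a unique maximizer over admissible sequences. For $N\in\mathbb{N}$ and $\xi_1,\dots,\xi_N\ge0$ with $\sum_{j=1}^N\xi_j\le B$, define $\mathcal{T}_N(\xi_1,\dots,\xi_N)=\mathcal{T}_\infty(\xi_1,\dots,\xi_N,0,0,\dots)$. $\mathcal{T}_N$ has a unique maximizer over this compact set, denoted $(\xi_j^{(N)*})_{j=1}^N$. *)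

From Stdlib Require Import Reals Lra.
From Coquelicot Require Import Coquelicot.
Open Scope R_scope.

Definition log2 (x : R) : R := ln x / ln 2.

(* Sequences are 0-indexed: x i stands for the paper's x_{i+1}. *)

(* Admissible: nonnegative and sum_j x_j <= B (all partial sums <= B). *)
Definition admissible (B : R) (x : nat -> R) : Prop :=
  (forall i, 0 <= x i) /\ (forall n, sum_f_R0 x n <= B).

(* Requires w >= 1.
   First sum: k = i+1 for i = 0..w-1.
   Second sum: j = i+1, weight p(1-p)^{j+w-1} = p(1-p)^{i+w}.
   Third sum: k = i+1, weight p^2(1-p)^{k+w-1} = p^2(1-p)^{i+w},
   and sum_{j=1}^{k} x_j = sum_f_R0 x i. *)
Definition T_inf (p gamma B : R) (w : nat) (x : nat -> R) : R :=
  sum_f_R0 (fun i => p ^ 2 * (1 - p) ^ i * (INR (S i) / 2)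
                      * log2 (1 + gamma * (B / INR (S i)))) (w - 1)
  + Series (fun i => p * (1 - p) ^ (i + w) * (1 / 2) * log2 (1 + gamma * x i))
  + Series (fun i => p ^ 2 * (1 - p) ^ (i + w) * (INR w / 2)
                      * log2 (1 + gamma * ((B - sum_f_R0 x i) / INR w))).

(* Zero-extension of a finite vector (xi_1, ..., xi_N), given as the first N
   values of a function nat -> R. *)
Definition ext0 (N : nat) (xi : nat -> R) : nat -> R :=
  fun i => if Nat.ltb i N then xi i else 0.

Definition T_N (p gamma B : R) (w N : nat) (xi : nat -> R) : R :=
  T_inf p gamma B w (ext0 N xi).

Definition feasibleN (B : R) (N : nat) (xi : nat -> R) : Prop :=
  (forall i, (i < N)%nat -> 0 <= xi i) /\ sum_n xi (N - 1) <= B.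

From Stdlib Require Import Reals Lra Lia.
From Coquelicot Require Import Coquelicot.
Open Scope R_scope.

(* Along every coordinate j, T_inf is concave with a quantitative strict gain:
   the midpoint of two admissible sequences whose j-th entries differ by at
   least eps beats the average of their values by some gain_j(eps) > 0, since
   log2 (1 + gamma x_j) is strictly concave and every other term is concave.
   Hence an admissible x with |x_j - xi*_j| >= eps has
   T_inf x <= T_inf xi* - 2 gain_j(eps).  On the other hand the zero-extension
   of xi^(N)* is admissible and, by maximality, does at least as well as the
   truncation of xi* to N entries, which loses at most
   (1/2) log2 (1 + gamma B) (1 - p)^N.  For large N both cannot hold. *)

Lemma log2_1 : log2 1 = 0.
Proof. unfold log2. rewrite ln_1. unfold Rdiv. ring. Qed.

Lemma log2_mult a b : 0 < a -> 0 < b -> log2 (a * b) = log2 a + log2 b.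
Proof. intros Ha Hb. unfold log2. rewrite ln_mult by assumption. unfold Rdiv. ring. Qed.

Lemma ln2_pos : 0 < ln 2.
Proof. pose proof ln_lt_2. lra. Qed.

Lemma log2_le a b : 0 < a -> a <= b -> log2 a <= log2 b.
Proof.
  intros Ha Hab. unfold log2, Rdiv. apply Rmult_le_compat_r.
  - left. apply Rinv_0_lt_compat, ln2_pos.
  - apply ln_le; assumption.
Qed.

Lemma log2_nonneg a : 1 <= a -> 0 <= log2 a.
Proof. intros Ha. rewrite <- log2_1. apply log2_le; lra. Qed.

Lemma log2_pos a : 1 < a -> 0 < log2 a.
Proof.
  intros Ha. unfold log2. apply Rdiv_lt_0_compat; [| apply ln2_pos].
  rewrite <- ln_1. apply ln_increasing; lra.
Qed.

Lemma log2_midpoint_gap a b M d :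
  0 < a -> 0 < b -> a <= M -> b <= M -> d ^ 2 <= (a - b) ^ 2 ->
  (log2 a + log2 b + log2 (1 + d ^ 2 / (4 * M ^ 2))) / 2 <= log2 ((a + b) / 2).
Proof.
  intros Ha Hb HaM HbM Hd.
  assert (Ht : 0 <= d ^ 2 / (4 * M ^ 2)) by (apply Rle_mult_inv_pos; nra).
  (* a b <= M^2, and a b + (a - b)^2 / 4 = ((a + b) / 2)^2 *)
  assert (Hprod : a * b * (1 + d ^ 2 / (4 * M ^ 2)) <= (a + b) / 2 * ((a + b) / 2)).
  { assert (a * b * (d ^ 2 / (4 * M ^ 2)) <= d ^ 2 / 4).
    { replace (d ^ 2 / 4) with (M ^ 2 * (d ^ 2 / (4 * M ^ 2))) by (field; lra).
      apply Rmult_le_compat_r; nra. }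
    nra. }
  apply log2_le in Hprod; [| apply Rmult_lt_0_compat; nra].
  rewrite !log2_mult in Hprod by nra.
  lra.
Qed.

Lemma log2_midpoint_concave a b :
  0 < a -> 0 < b -> (log2 a + log2 b) / 2 <= log2 ((a + b) / 2).
Proof.
  intros Ha Hb.
  pose proof (log2_midpoint_gap a b (a + b) 0 Ha Hb) as Hgap.
  rewrite pow_i, Rdiv_0_l, Rplus_0_r, log2_1, Rplus_0_r in Hgap by lia.
  apply Hgap; [lra | lra | apply pow2_ge_0].
Qed.

Lemma ex_series_geom_dominated (a : nat -> R) q C :
  0 <= q < 1 -> (forall i, 0 <= a i <= C * q ^ i) -> ex_series a.
Proof.
  intros Hq Ha.
  apply (ex_series_le a (fun i => C * q ^ i)).
  - intros i. change (norm (a i)) with (Rabs (a i)).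
    rewrite Rabs_pos_eq; apply Ha.
  - exact (@ex_series_scal_l R_AbsRing R_NormedModule C _
             (ex_series_geom q ltac:(rewrite Rabs_pos_eq; lra))).
Qed.

Lemma sum_f_R0_ge_term (a : nat -> R) n : (forall i, 0 <= a i) -> a n <= sum_f_R0 a n.
Proof.
  intros Ha. destruct n as [|n]; simpl; [lra |].
  pose proof (cond_pos_sum a n Ha). lra.
Qed.

Lemma sum_f_R0_le_Series (a : nat -> R) n :
  ex_series a -> (forall i, 0 <= a i) -> sum_f_R0 a n <= Series a.
Proof.
  intros Ha Hpos. apply sum_incr; [| exact Hpos].
  exact (proj1 (is_series_Reals _ _) (Series_correct _ Ha)).
Qed.

Lemma Series_midpoint_le (a b c : nat -> R) g j :
  ex_series a -> ex_series b -> ex_series c ->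
  (forall i, (a i + b i) / 2 <= c i) -> (a j + b j) / 2 + g <= c j ->
  (Series a + Series b) / 2 + g <= Series c.
Proof.
  intros Ha Hb Hc Hle Hj.
  set (d i := c i - / 2 * (a i + b i)).
  assert (Hab : ex_series (fun i => a i + b i))
    by exact (@ex_series_plus R_AbsRing R_NormedModule a b Ha Hb).
  assert (Hhalf : ex_series (fun i => / 2 * (a i + b i)))
    by exact (@ex_series_scal_l R_AbsRing R_NormedModule (/ 2) _ Hab).
  assert (Hd : ex_series d)
    by exact (@ex_series_minus R_AbsRing R_NormedModule c _ Hc Hhalf).
  assert (HSd : Series d = Series c - (Series a + Series b) / 2).
  { unfold d. rewrite Series_minus, Series_scal_l, Series_plus by assumption.
    field. }
  assert (Hdpos : forall i, 0 <= d i) by (intros i; specialize (Hle i); unfold d; lra).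
  pose proof (sum_f_R0_ge_term d j Hdpos).
  pose proof (sum_f_R0_le_Series d j Hd Hdpos).
  unfold d in *. lra.
Qed.

Lemma Series_geom_tail_le (a : nat -> R) q C n :
  0 <= q < 1 -> (0 < n)%nat -> (forall i, (i < n)%nat -> a i = 0) ->
  (forall i, 0 <= a i <= C * q ^ i) -> Series a <= C * q ^ n / (1 - q).
Proof.
  intros Hq Hn Hzero Hdom.
  assert (Ha : ex_series a) by exact (ex_series_geom_dominated a q C Hq Hdom).
  assert (Hq1 : Rabs q < 1) by (rewrite Rabs_pos_eq; lra).
  rewrite (Series_incr_n a n Hn Ha), sum_eq_R0 by (intros i Hi; apply Hzero; lia).
  assert (Htail : Series (fun k => a (n + k)%nat) <= Series (fun k => C * q ^ n * q ^ k)).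
  { apply Series_le.
    - intros k. rewrite Rmult_assoc, <- pow_add. apply Hdom.
    - exact (@ex_series_scal_l R_AbsRing R_NormedModule (C * q ^ n) _ (ex_series_geom q Hq1)). }
  rewrite Series_scal_l, Series_geom in Htail by exact Hq1.
  unfold Rdiv. lra.
Qed.

Lemma eventually_geom_lt c q e :
  Rabs q < 1 -> 0 < e -> eventually (fun n => c * q ^ n < e).
Proof.
  intros Hq He.
  assert (Hlim : is_lim_seq (fun n => c * q ^ n) 0).
  { replace (Finite 0) with (Rbar_mult c 0) by (simpl; f_equal; ring).
    apply is_lim_seq_scal_l, is_lim_seq_geom, Hq. }
  apply is_lim_seq_spec in Hlim.
  generalize (Hlim (mkposreal e He)). apply filter_imp.
  intros n Hn. simpl in Hn. rewrite Rminus_0_r in Hn.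
  eapply Rle_lt_trans; [apply RRle_abs | exact Hn].
Qed.

Lemma sum_f_R0_le_mono (a : nat -> R) m n :
  (forall i, 0 <= a i) -> (m <= n)%nat -> sum_f_R0 a m <= sum_f_R0 a n.
Proof.
  intros Ha Hmn. induction Hmn as [| n _ IH]; simpl; [lra |].
  specialize (Ha (S n)). lra.
Qed.

Lemma ext0_lt N v i : (i < N)%nat -> ext0 N v i = v i.
Proof. intros H. unfold ext0. apply Nat.ltb_lt in H. rewrite H. reflexivity. Qed.

Lemma ext0_ge N v i : (N <= i)%nat -> ext0 N v i = 0.
Proof. intros H. unfold ext0. apply Nat.ltb_ge in H. rewrite H. reflexivity. Qed.

Lemma ext0_nonneg N v : (forall i, (i < N)%nat -> 0 <= v i) -> forall i, 0 <= ext0 N v i.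
Proof.
  intros Hv i. destruct (Nat.lt_ge_cases i N).
  - rewrite ext0_lt by assumption. auto.
  - rewrite ext0_ge by assumption. lra.
Qed.

Lemma sum_f_R0_ext0_lt N v m : (m < N)%nat -> sum_f_R0 (ext0 N v) m = sum_f_R0 v m.
Proof.
  induction m as [| m IH]; intros Hm; simpl.
  - apply ext0_lt. exact Hm.
  - rewrite IH, ext0_lt by lia. reflexivity.
Qed.

Lemma sum_f_R0_ext0_ge N v m :
  (0 < N)%nat -> (N - 1 <= m)%nat -> sum_f_R0 (ext0 N v) m = sum_f_R0 v (N - 1).
Proof.
  intros HN Hm. induction Hm as [| m Hm IH].
  - apply sum_f_R0_ext0_lt. lia.
  - simpl. rewrite IH, ext0_ge by lia. ring.
Qed.

Lemma sum_f_R0_ext0_le N v m :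
  (forall i, 0 <= v i) -> sum_f_R0 (ext0 N v) m <= sum_f_R0 v m.
Proof.
  intros Hv. apply sum_growing. intros i.
  destruct (Nat.lt_ge_cases i N).
  - rewrite ext0_lt by assumption. lra.
  - rewrite ext0_ge by assumption. apply Hv.
Qed.

Definition midpoint (x y : nat -> R) (i : nat) : R := (x i + y i) / 2.

Lemma sum_f_R0_midpoint x y n :
  sum_f_R0 (midpoint x y) n = (sum_f_R0 x n + sum_f_R0 y n) / 2.
Proof. induction n as [| n IH]; simpl; [| rewrite IH]; unfold midpoint; lra. Qed.

Lemma admissible_bounds B x i : admissible B x -> 0 <= x i <= B.
Proof.
  intros [Hpos Hsum]. split; [apply Hpos |].
  eapply Rle_trans; [apply sum_f_R0_ge_term, Hpos | apply Hsum].
Qed.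

Lemma admissible_sum_bounds B x n : admissible B x -> 0 <= sum_f_R0 x n <= B.
Proof. intros [Hpos Hsum]. split; [apply cond_pos_sum, Hpos | apply Hsum]. Qed.

Lemma admissible_midpoint B x y :
  admissible B x -> admissible B y -> admissible B (midpoint x y).
Proof.
  intros Hx Hy. split.
  - intros i. pose proof (admissible_bounds B x i Hx).
    pose proof (admissible_bounds B y i Hy). unfold midpoint. lra.
  - intros n. rewrite sum_f_R0_midpoint.
    pose proof (admissible_sum_bounds B x n Hx).
    pose proof (admissible_sum_bounds B y n Hy). lra.
Qed.

Lemma admissible_ext0 B N y : admissible B y -> admissible B (ext0 N y).
Proof.
  intros [Hpos Hsum]. split.
  - apply ext0_nonneg. intros i _. apply Hpos.
  - intros n. eapply Rle_trans; [apply sum_f_R0_ext0_le, Hpos | apply Hsum].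
Qed.

Lemma admissible_feasibleN B N y : admissible B y -> feasibleN B N y.
Proof. intros [Hpos Hsum]. split; [auto |]. rewrite sum_n_Reals. apply Hsum. Qed.

Lemma feasibleN_ext0_admissible B N v :
  (0 < N)%nat -> feasibleN B N v -> admissible B (ext0 N v).
Proof.
  intros HN [Hpos Hsum]. rewrite sum_n_Reals in Hsum.
  pose proof (ext0_nonneg N v Hpos) as Hext.
  split; [exact Hext |]. intros m.
  destruct (Nat.le_ge_cases m (N - 1)) as [Hm | Hm].
  - rewrite <- (sum_f_R0_ext0_ge N v (N - 1)) in Hsum by lia.
    eapply Rle_trans; [apply sum_f_R0_le_mono |]; eassumption.
  - rewrite sum_f_R0_ext0_ge by assumption. exact Hsum.
Qed.

Section T_inf_estimates.

Variables (p gamma B : R) (w : nat).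
Hypotheses (Hp : 0 < p < 1) (Hgamma : 0 < gamma) (Hw : (1 <= w)%nat).

Definition weight (c1 c2 : R) (i : nat) : R := c1 * (1 - p) ^ (i + w) * c2.

Definition coord_term (x : nat -> R) (i : nat) : R :=
  weight p (1 / 2) i * log2 (1 + gamma * x i).

Definition budget_term (x : nat -> R) (i : nat) : R :=
  weight (p ^ 2) (INR w / 2) i * log2 (1 + gamma * ((B - sum_f_R0 x i) / INR w)).

Definition T_head : R :=
  sum_f_R0 (fun i => p ^ 2 * (1 - p) ^ i * (INR (S i) / 2)
                      * log2 (1 + gamma * (B / INR (S i)))) (w - 1).

Lemma T_inf_split x :
  T_inf p gamma B w x = T_head + Series (coord_term x) + Series (budget_term x).
Proof. reflexivity. Qed.

Definition gain (j : nat) (eps : R) : R :=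
  weight p (1 / 2) j * log2 (1 + (gamma * eps) ^ 2 / (4 * (1 + gamma * B) ^ 2)) / 2.

Lemma weight_bounds c1 c2 i :
  0 <= c1 -> 0 <= c2 -> 0 <= weight c1 c2 i <= c1 * c2 * (1 - p) ^ i.
Proof.
  intros Hc1 Hc2. unfold weight. rewrite pow_add.
  assert (Hqi : 0 <= (1 - p) ^ i) by (apply pow_le; lra).
  assert (Hqw : 0 <= (1 - p) ^ w <= 1).
  { split; [apply pow_le; lra |]. rewrite <- (pow1 w) at 2. apply pow_incr. lra. }
  split.
  - apply Rmult_le_pos; [| assumption]. apply Rmult_le_pos; [assumption |]. nra.
  - assert (c1 * c2 * ((1 - p) ^ i * (1 - p) ^ w) <= c1 * c2 * (1 - p) ^ i).
    { apply Rmult_le_compat_l; [nra |]. nra. }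
    nra.
Qed.

Lemma weighted_log2_bounds c1 c2 i u U :
  0 <= c1 -> 0 <= c2 -> 0 <= u <= U ->
  0 <= weight c1 c2 i * log2 (1 + gamma * u) <= c1 * c2 * log2 (1 + gamma * U) * (1 - p) ^ i.
Proof.
  intros Hc1 Hc2 Hu.
  pose proof (weight_bounds c1 c2 i Hc1 Hc2).
  assert (0 <= log2 (1 + gamma * u)) by (apply log2_nonneg; nra).
  assert (log2 (1 + gamma * u) <= log2 (1 + gamma * U)) by (apply log2_le; nra).
  split; [nra |].
  replace (c1 * c2 * log2 (1 + gamma * U) * (1 - p) ^ i)
    with (c1 * c2 * (1 - p) ^ i * log2 (1 + gamma * U)) by ring.
  apply Rmult_le_compat; lra.
Qed.

Lemma coord_term_bounds x i : admissible B x ->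
  0 <= coord_term x i <= p * (1 / 2) * log2 (1 + gamma * B) * (1 - p) ^ i.
Proof.
  intros Hx. apply weighted_log2_bounds; [lra | lra | apply admissible_bounds, Hx].
Qed.

Lemma budget_fraction_bounds x i : admissible B x ->
  0 <= (B - sum_f_R0 x i) / INR w <= B / INR w.
Proof.
  intros Hx. pose proof (admissible_sum_bounds B x i Hx).
  assert (1 <= INR w) by (apply (le_INR 1); exact Hw).
  split; [apply Rle_mult_inv_pos; lra |].
  unfold Rdiv. apply Rmult_le_compat_r; [left; apply Rinv_0_lt_compat |]; lra.
Qed.

Lemma budget_term_bounds x i : admissible B x ->
  0 <= budget_term x i
    <= p ^ 2 * (INR w / 2) * log2 (1 + gamma * (B / INR w)) * (1 - p) ^ i.
Proof.
  intros Hx. pose proof (pos_INR w).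
  apply weighted_log2_bounds; [nra | lra | apply budget_fraction_bounds, Hx].
Qed.

Lemma ex_series_coord_term x : admissible B x -> ex_series (coord_term x).
Proof.
  intros Hx. eapply (ex_series_geom_dominated _ (1 - p));
    [lra | intros i; apply coord_term_bounds, Hx].
Qed.

Lemma ex_series_budget_term x : admissible B x -> ex_series (budget_term x).
Proof.
  intros Hx. eapply (ex_series_geom_dominated _ (1 - p));
    [lra | intros i; apply budget_term_bounds, Hx].
Qed.

Lemma gain_zero j : gain j 0 = 0.
Proof.
  unfold gain. rewrite Rmult_0_r, pow_i, Rdiv_0_l, Rplus_0_r, log2_1 by lia.
  unfold Rdiv. ring.
Qed.

Lemma gain_pos j eps : 0 <= B -> 0 < eps -> 0 < gain j eps.
Proof.
  intros HB Heps. unfold gain, weight.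
  assert (0 < (1 - p) ^ (j + w)) by (apply pow_lt; lra).
  assert (0 < log2 (1 + (gamma * eps) ^ 2 / (4 * (1 + gamma * B) ^ 2))).
  { apply log2_pos.
    assert (0 < (gamma * eps) ^ 2 / (4 * (1 + gamma * B) ^ 2)); [| lra].
    apply Rdiv_lt_0_compat; [apply pow_lt | apply Rmult_lt_0_compat, pow_lt]; nra. }
  apply Rdiv_lt_0_compat; [| lra].
  apply Rmult_lt_0_compat; [| assumption].
  apply Rmult_lt_0_compat; [apply Rmult_lt_0_compat |]; lra.
Qed.

Lemma coord_term_midpoint x y i eps :
  admissible B x -> admissible B y -> 0 <= eps <= Rabs (x i - y i) ->
  (coord_term x i + coord_term y i) / 2 + gain i eps <= coord_term (midpoint x y) i.
Proof.
  intros Hx Hy Heps.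
  pose proof (admissible_bounds B x i Hx). pose proof (admissible_bounds B y i Hy).
  assert (Hd : (gamma * eps) ^ 2 <= (1 + gamma * x i - (1 + gamma * y i)) ^ 2).
  { replace (1 + gamma * x i - (1 + gamma * y i)) with (gamma * (x i - y i)) by ring.
    rewrite !Rpow_mult_distr, <- (pow2_abs (x i - y i)).
    apply Rmult_le_compat_l; [nra |]. apply pow_incr. exact Heps. }
  pose proof (log2_midpoint_gap (1 + gamma * x i) (1 + gamma * y i) (1 + gamma * B)
                (gamma * eps) ltac:(nra) ltac:(nra) ltac:(nra) ltac:(nra) Hd) as Hgap.
  pose proof (weight_bounds p (1 / 2) i ltac:(lra) ltac:(lra)) as [Hw0 _].
  unfold coord_term, gain, midpoint.
  replace (1 + gamma * ((x i + y i) / 2))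
    with ((1 + gamma * x i + (1 + gamma * y i)) / 2) by field.
  apply (Rmult_le_compat_l (weight p (1 / 2) i)) in Hgap; [lra | exact Hw0].
Qed.

Lemma budget_term_midpoint x y i :
  admissible B x -> admissible B y ->
  (budget_term x i + budget_term y i) / 2 <= budget_term (midpoint x y) i.
Proof.
  intros Hx Hy.
  pose proof (budget_fraction_bounds x i Hx). pose proof (budget_fraction_bounds y i Hy).
  assert (0 < INR w) by (apply (lt_INR 0); lia).
  pose proof (log2_midpoint_concave (1 + gamma * ((B - sum_f_R0 x i) / INR w))
                (1 + gamma * ((B - sum_f_R0 y i) / INR w)) ltac:(nra) ltac:(nra)) as Hconc.
  pose proof (weight_bounds (p ^ 2) (INR w / 2) i ltac:(nra) ltac:(lra)) as [Hw0 _].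
  unfold budget_term. rewrite sum_f_R0_midpoint.
  replace (1 + gamma * ((B - (sum_f_R0 x i + sum_f_R0 y i) / 2) / INR w))
    with ((1 + gamma * ((B - sum_f_R0 x i) / INR w)
           + (1 + gamma * ((B - sum_f_R0 y i) / INR w))) / 2) by (field; lra).
  apply (Rmult_le_compat_l (weight (p ^ 2) (INR w / 2) i)) in Hconc; [lra | exact Hw0].
Qed.

Lemma T_inf_midpoint x y j eps :
  admissible B x -> admissible B y -> 0 <= eps <= Rabs (x j - y j) ->
  (T_inf p gamma B w x + T_inf p gamma B w y) / 2 + gain j eps
    <= T_inf p gamma B w (midpoint x y).
Proof.
  intros Hx Hy Heps.
  pose proof (admissible_midpoint B x y Hx Hy) as Hm.
  assert (Hcoord : (Series (coord_term x) + Series (coord_term y)) / 2 + gain j eps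
                   <= Series (coord_term (midpoint x y))).
  { apply Series_midpoint_le with (j := j); try apply ex_series_coord_term; try assumption.
    - intros i. rewrite <- (Rplus_0_r (_ / 2)), <- (gain_zero i).
      apply coord_term_midpoint; [assumption | assumption | split; [lra | apply Rabs_pos]].
    - apply coord_term_midpoint; assumption. }
  assert (Hbudget : (Series (budget_term x) + Series (budget_term y)) / 2 + 0
                    <= Series (budget_term (midpoint x y))).
  { apply Series_midpoint_le with (j := O); try apply ex_series_budget_term; try assumption.
    - intros i. apply budget_term_midpoint; assumption.
    - rewrite Rplus_0_r. apply budget_term_midpoint; assumption. }
  rewrite !T_inf_split. lra.
Qed.

Lemma T_inf_ext0_ge y N : (0 < N)%nat -> admissible B y ->
  T_inf p gamma B w y - log2 (1 + gamma * B) / 2 * (1 - p) ^ N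
    <= T_inf p gamma B w (ext0 N y).
Proof.
  intros HN Hy.
  pose proof (admissible_ext0 B N y Hy) as Hext.
  assert (Hcoord : Series (fun i => coord_term y i - coord_term (ext0 N y) i)
                   <= p * (1 / 2) * log2 (1 + gamma * B) * (1 - p) ^ N / (1 - (1 - p))).
  { apply Series_geom_tail_le; [lra | exact HN | |].
    - intros i Hi. unfold coord_term. rewrite ext0_lt by exact Hi. ring.
    - intros i. pose proof (coord_term_bounds y i Hy).
      destruct (Nat.lt_ge_cases i N) as [Hi | Hi].
      + replace (coord_term (ext0 N y) i) with (coord_term y i)
          by (unfold coord_term; rewrite ext0_lt; auto).
        lra.
      + replace (coord_term (ext0 N y) i) with 0
          by (unfold coord_term; rewrite ext0_ge, Rmult_0_r, Rplus_0_r, log2_1 by auto; ring).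
        lra. }
  rewrite Series_minus in Hcoord by (apply ex_series_coord_term; assumption).
  replace (p * (1 / 2) * log2 (1 + gamma * B) * (1 - p) ^ N / (1 - (1 - p)))
    with (log2 (1 + gamma * B) / 2 * (1 - p) ^ N) in Hcoord by (field; lra).
  assert (Hbudget : Series (budget_term y) <= Series (budget_term (ext0 N y))).
  { apply Series_le; [| apply ex_series_budget_term, Hext].
    intros i. split; [apply budget_term_bounds, Hy |].
    pose proof (budget_fraction_bounds y i Hy).
    pose proof (sum_f_R0_ext0_le N y i (proj1 Hy)).
    assert (0 < INR w) by (apply (lt_INR 0); lia).
    unfold budget_term. apply Rmult_le_compat_l; [apply weight_bounds; nra |].
    apply log2_le; [nra |].
    apply Rplus_le_compat_l, Rmult_le_compat_l; [lra |].
    unfold Rdiv. apply Rmult_le_compat_r; [left; apply Rinv_0_lt_compat |]; lra. }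
  rewrite !T_inf_split. lra.
Qed.

Lemma T_inf_far_from_maximizer xs x j eps :
  admissible B xs ->
  (forall z, admissible B z -> T_inf p gamma B w z <= T_inf p gamma B w xs) ->
  admissible B x -> 0 <= eps <= Rabs (x j - xs j) ->
  T_inf p gamma B w x + 2 * gain j eps <= T_inf p gamma B w xs.
Proof.
  intros Hxs Hopt Hx Heps.
  pose proof (T_inf_midpoint x xs j eps Hx Hxs Heps).
  pose proof (Hopt _ (admissible_midpoint B x xs Hx Hxs)).
  lra.
Qed.

Lemma T_N_maximizer_ge N xi xs : (0 < N)%nat ->
  (forall eta, feasibleN B N eta -> T_N p gamma B w N eta <= T_N p gamma B w N xi) ->
  admissible B xs ->
  T_inf p gamma B w xs - log2 (1 + gamma * B) / 2 * (1 - p) ^ N <= T_N p gamma B w N xi.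
Proof.
  intros HN Hmax Hxs.
  pose proof (Hmax xs (admissible_feasibleN B N xs Hxs)).
  pose proof (T_inf_ext0_ge xs N HN Hxs).
  unfold T_N in *. lra.
Qed.

End T_inf_estimates.

Theorem lemma9 (p gamma B : R) (w : nat)
  (xiN : nat -> nat -> R) (xistar : nat -> R) :
  0 < p < 1 -> 0 < gamma -> 0 < B -> (1 <= w)%nat ->
  (* for each N >= 1, xiN N (restricted to indices < N) maximizes T_N *)
  (forall N, (1 <= N)%nat ->
     feasibleN B N (xiN N) /\
     (forall eta, feasibleN B N eta ->
        T_N p gamma B w N eta <= T_N p gamma B w N (xiN N))) ->
  (* xistar is the unique maximizer of T_inf over admissible sequences *)
  admissible B xistar ->
  (forall x, admissible B x -> T_inf p gamma B w x <= T_inf p gamma B w xistar) ->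
  (forall y, admissible B y ->
     (forall x, admissible B x -> T_inf p gamma B w x <= T_inf p gamma B w y) ->
     y = xistar) ->
  forall j : nat, is_lim_seq (fun N => xiN N j) (xistar j).
Proof.
  intros Hp Hgamma HB Hw Hmax Hxs Hopt _ j.
  apply is_lim_seq_spec. intros eps.
  set (g := gain p gamma B w j eps).
  assert (Hg : 0 < g) by exact (gain_pos p gamma B w Hp Hgamma j eps (Rlt_le _ _ HB) (cond_pos eps)).
  assert (Htail : eventually (fun N => log2 (1 + gamma * B) / 2 * (1 - p) ^ N < 2 * g))
    by (apply eventually_geom_lt; [rewrite Rabs_pos_eq |]; lra).
  assert (Hlarge : eventually (fun N => (j < N)%nat)) by (exists (S j); intros N HN; lia).
  generalize (filter_and _ _ Htail Hlarge). apply filter_imp.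
  intros N [HtailN HjN]. apply Rnot_le_lt. intros Hfar.
  destruct (Hmax N ltac:(lia)) as [Hfeas HmaxN].
  pose proof (T_N_maximizer_ge p gamma B w Hp Hgamma Hw N (xiN N) xistar ltac:(lia) HmaxN Hxs).
  assert (Hclose : 0 <= eps <= Rabs (ext0 N (xiN N) j - xistar j))
    by (rewrite ext0_lt by lia; pose proof (cond_pos eps); lra).
  pose proof (T_inf_far_from_maximizer p gamma B w Hp Hgamma Hw xistar (ext0 N (xiN N)) j eps
                Hxs Hopt (feasibleN_ext0_admissible B N _ ltac:(lia) Hfeas) Hclose).
  unfold T_N, g in *. lra.
Qed.
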